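(* Let $\mu$ be a probability density on $[q]^n\times[q]^n$ such that $H_\infty(\mu_I)\ge1.9\log q\cdot|I|-t$ for all $I\subseteq[n]$. Then for all $d\in\mathbb N$ there exists a partition $[q]^n\times[q]^n=\left(\bigcup_{i\in[N]}\mathcal R_i\right)\cup\mathsf{Error}$, where $\mathcal R_i=\mathcal A_i\times\mathcal B_i$ are combinatorial rectangles ($\mathcal A_i,\mathcal B_i\subseteq[q]^n$), such that (1) for each $i\in[N]$, if $(X_i,Y_i)\sim\mu$ conditioned on $\mathcal R_i$, then $X_i,Y_i$ are aligned $d$-CBD; and (2) $\mu(\mathsf{Error})\le2^t\cdot(d\,q^{-0.05})^d$.
   Context: Logarithms base 2. A density on a finite domain $\mathcal D$ is $\mu\ge0$ with uniform average $1$; $Z\sim\mu$ means $\Pr[Z=z]=\mu(z)/|\mathcal D|$; $\mu(S)=\Pr_{Z\sim\mu}[Z\in S]$. For $I\subseteq[n]$, $\mu_I$ is the density on $[q]^I\times[q]^I$ of $(X_I,Y_I)$ where $(X,Y)\sim\mu$ and $X_I$ denotes projection to coordinates in $I$; $H_\infty(\mu_I)=\min\log(q^{2|I|}/\mu_I(x,y))$. For a random variable $Z$, $H_\infty(Z)=\min_z\log(1/\Pr[Z=z])$. A random variable $X$ on $[q]^n$ is $d$-CBD if there is $I\subseteq[n]$, $|I|\le d$, with $X_I$ constant and $H_\infty(X_J)\ge0.8\log q\cdot|J|$ for every $J\subseteq[n]\setminus I$; two $d$-CBD random variables are aligned if they have the same such set $I$. *)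

From HB Require Import structures.
From mathcomp Require Import all_boot all_order all_algebra.
From mathcomp Require Import reals exp.
Set Implicit Arguments. Unset Strict Implicit. Unset Printing Implicit Defensive.
Import Order.TTheory GRing.Theory Num.Theory.
Local Open Scope ring_scope.

Definition cube (n q : nat) := {ffun 'I_n -> 'I_q}.

Section Defs.
Variable R : realType.

Definition log2 (x : R) : R := ln x / ln 2.

(* projection x_I of x to the coordinates in I, encoded as an element of
   'I_n -> option 'I_q (None outside I); this is a bijective encoding of [q]^I. *)
Definition restrict (n q : nat) (I : {set 'I_n}) (x : cube n q)
  : {ffun 'I_n -> option 'I_q} :=
  [ffun i => if i \in I then Some (x i) else None].

Definition is_density (T : finType) (mu : T -> R) : Prop :=
  (forall z, 0 <= mu z) /\ \sum_(z : T) mu z = #|{: T}|%:R.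

Definition pmf_of (T : finType) (mu : T -> R) (z : T) : R := mu z / #|{: T}|%:R.

Definition dprob (T : finType) (mu : T -> R) (S : {set T}) : R :=
  \sum_(z in S) pmf_of mu z.

Definition cond_pmf (T : finType) (mu : T -> R) (S : {set T}) (z : T) : R :=
  if z \in S then mu z / (\sum_(w in S) mu w) else 0.

(* H_oo(f(Z)) >= k where Pr[Z = z] = p z, i.e.
   min_u log(1/Pr[f(Z) = u]) >= k, i.e. Pr[f(Z) = u] <= 2^(-k) for all u. *)
Definition Hinf_ge (T U : finType) (p : T -> R) (f : T -> U) (k : R) : Prop :=
  forall u : U, \sum_(z | f z == u) p z <= powR 2 (- k).

Definition CBD_with (T : finType) (n q : nat) (p : T -> R) (Xof : T -> cube n q)
    (d : nat) (I : {set 'I_n}) : Prop :=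
  [/\ (#|I| <= d)%N,
      (* X_I is constant *)
      (exists u, \sum_(z | restrict I (Xof z) == u) p z = 1) &
      (forall J : {set 'I_n}, J \subset ~: I ->
         Hinf_ge p (fun z => restrict J (Xof z))
                 ((4 / 5) * log2 q%:R * #|J|%:R))].

Definition aligned_CBD (n q : nat) (p : cube n q * cube n q -> R) (d : nat) : Prop :=
  exists I : {set 'I_n},
    CBD_with p (fun z => z.1) d I /\ CBD_with p (fun z => z.2) d I.

End Defs.

(* Write g = q^(1/20).  The hypothesis bounds the mass of every cell
   {x_I = u, y_I = v} by 2^t g^(-38|I|), while d-CBD asks that the marginals on
   unfixed coordinates J have point masses at most g^(-16|J|).  Refine rectangles
   A x B whose two sides are constant on a coordinate set I.  If A x B is not
   already aligned d-CBD, some J outside I and value u are heavy on one side, say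
   Pr[X_J = u | A x B] > g^(-16|J|): split off A' = {x in A | x_J = u}, recurse on
   (A \ A') x B with the same I, and cut A' x B along the values of y_J, recursing
   with I u J.  Rectangles with |I| > d go to the error set.

   The invariant is that a rectangle of mass m fixed on s coordinates is refined
   with error at most K sqrt(m) rho^s, where rho = 1/(2 g^18).  At a split,
   Cauchy-Schwarz over the at most q^|J| = g^(20|J|) fibres bounds their total
   sqrt-mass by g^(10|J|) sqrt(m(A' x B)), while heaviness makes
   sqrt(m(A x B)) - sqrt(m((A \ A') x B)) at least g^(-8|J|)/2 * sqrt(m(A' x B));
   this pays for the fibres since 2 rho^k g^(10k) <= g^(-8k).  A discarded
   rectangle has mass at most 2^t g^(-38s) <= (K rho^s)^2 for
   K = 2^(t/2) (2/g)^(d+1), and K <= 2^t (d/g)^d unless that bound is at least 1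
   anyway (for d = 1 this uses that a heavy J at the top forces 2^t > g^2). *)

From HB Require Import structures.
From mathcomp Require Import all_boot all_order all_algebra.
From mathcomp Require Import reals exp.
From mathcomp Require Import ring lra zify.
Import Order.TTheory GRing.Theory Num.Theory.
Local Open Scope ring_scope.
Set Implicit Arguments. Unset Strict Implicit. Unset Printing Implicit Defensive.

Section Rectangles.
Variables (aT bT : finType).

Lemma setXDl (A A' : {set aT}) (B : {set bT}) :
  setX A B :\: setX A' B = setX (A :\: A') B.
Proof.
by apply/setP => -[x y]; rewrite !inE /=; case: (x \in A'); case: (y \in B); rewrite ?andbF.
Qed.

Lemma setXDr (A : {set aT}) (B B' : {set bT}) :
  setX A B :\: setX A B' = setX A (B :\: B').
Proof. by apply/setP => -[x y]; rewrite !inE; case: (x \in A); case: (y \in B'). Qed.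

Lemma setX_sepl (A : {set aT}) (B : {set bT}) (P : pred aT) :
  [set z in setX A B | P z.1] = setX [set x in A | P x] B.
Proof. by apply/setP => -[x y]; rewrite !inE /= andbAC. Qed.

Lemma setX_sepr (A : {set aT}) (B : {set bT}) (P : pred bT) :
  [set z in setX A B | P z.2] = setX A [set y in B | P y].
Proof. by apply/setP => -[x y]; rewrite !inE /= andbA. Qed.

Lemma setXT : setX [set: aT] [set: bT] = [set: aT * bT].
Proof. by apply/setP => -[x y]; rewrite !inE. Qed.

End Rectangles.

Lemma in_setU_addn (T : finType) (X Y : {set T}) x : [disjoint X & Y] ->
  (x \in X :|: Y) = ((x \in X) + (x \in Y))%N :> nat.
Proof.
move=> dXY; rewrite inE; case Xx: (x \in X) => //=.
by rewrite (disjointFr dXY Xx).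
Qed.

Lemma count_nth_gt1 (X : Type) (a : pred X) (s : seq X) x0 (i j : 'I_(size s)) :
  i != j -> a (nth x0 s i) -> a (nth x0 s j) -> (1 < count a s)%N.
Proof.
move=> ij ai aj; rewrite -sum1_count big_mkcond /= (big_nth x0) big_mkord.
by rewrite (bigD1 i) //= (bigD1 j) 1?eq_sym //= ai aj addnA.
Qed.

Section Restrict.
Variables n q : nat.
Local Notation C := (cube n q).
Implicit Types (I J : {set 'I_n}) (x : C).

Lemma restrictP I x x' : reflect {in I, x =1 x'} (restrict I x == restrict I x').
Proof.
apply: (iffP eqP) => [/ffunP e i iI | e]; last first.
  by apply/ffunP => i; rewrite !ffunE; case: ifPn => // /e ->.
by have := e i; rewrite !ffunE iI => -[].
Qed.

Lemma card_restrict (D : finType) (f : D -> C) (X : {set D}) J :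
  (#|[set restrict J (f z) | z in X]| <= q ^ #|J|)%N.
Proof.
pose sJ := {i : 'I_n | i \in J}.
pose extend (h : {ffun sJ -> 'I_q}) : {ffun 'I_n -> option 'I_q} :=
  [ffun i => if insub i is Some j then Some (h j) else None].
have sub : [set restrict J (f z) | z in X] \subset [set extend h | h : {ffun sJ -> 'I_q}].
  apply/subsetP => _ /imsetP [z _ ->]; apply/imsetP.
  exists [ffun j => f z (val j)] => //; apply/ffunP => i; rewrite !ffunE.
  by case: insubP => [j iJ vj|/negbTE ->]; rewrite ?ffunE ?vj ?iJ.
apply: leq_trans (subset_leq_card sub) _; apply: leq_trans (leq_imset_card _ _) _.
by rewrite card_ffun card_ord card_sig.
Qed.

Lemma cells_setX J (A B : {set C}) :
  [set (restrict J z.1, restrict J z.2) | z in setX A B]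
  = setX [set restrict J x | x in A] [set restrict J y | y in B].
Proof.
apply/setP => -[v w]; apply/imsetP/idP => [[[x y]] | ].
  by rewrite !inE => /andP [xA yB] [-> ->] /=; rewrite !imset_f.
rewrite in_setX => /andP [/imsetP [x xA ->] /imsetP [y yB ->]].
by exists (x, y); rewrite ?inE ?xA.
Qed.

Lemma cube_q_gt0 J x : J != set0 -> (0 < q)%N.
Proof. by case/set0Pn => i _; case: (x i) => k /(leq_ltn_trans (leq0n k)). Qed.

Definition const_on I (A : {set C}) :=
  {in A &, forall x x', restrict I x = restrict I x'}.

Lemma card_restrict_const I (A : {set C}) :
  const_on I A -> (#|[set restrict I x | x in A]| <= 1)%N.
Proof.
move=> cA; apply/card_le1_eqP => _ _ /imsetP [x xA ->] /imsetP [x' x'A ->].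
exact: cA.
Qed.

Lemma const_on_sep J (A : {set C}) u : const_on J [set x in A | restrict J x == u].
Proof. by move=> x x'; rewrite !inE => /andP [_ /eqP ->] /andP [_ /eqP ->]. Qed.

Lemma const_onS I (A A' : {set C}) : A' \subset A -> const_on I A -> const_on I A'.
Proof. by move=> /subsetP sA cA x x' /sA xA /sA; apply: cA. Qed.

Lemma const_onU I J (A : {set C}) u :
  const_on I A -> const_on (I :|: J) [set x in A | restrict J x == u].
Proof.
move=> cA x x'; rewrite !inE => /andP [xA xu] /andP [x'A x'u].
apply/eqP/restrictP => i; rewrite inE => /orP [iI | iJ].
  by apply/restrictP: iI; rewrite (cA x x').
by apply/restrictP: iJ; rewrite (eqP xu) (eqP x'u).
Qed.

End Restrict.

Section RealFacts.
Variable R : realType.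

Lemma sqr_sum_le (I : finType) (P : pred I) (x : I -> R) :
  (\sum_(i | P i) x i) ^+ 2 <= #|P|%:R * \sum_(i | P i) x i ^+ 2.
Proof.
set S := \sum_(i | P i) x i; set N : R := #|P|%:R.
have [P0|Ppos] := posnP #|P|.
  rewrite /S big_pred0 => [|i]; first by rewrite expr0n /N P0 mul0r.
  by apply/negP => Pi; move: P0; rewrite (cardD1 i) [i \in _]Pi.
have N0 : 0 < N by rewrite ltr0n.
have var_ge0 : 0 <= \sum_(i | P i) (x i - S / N) ^+ 2 by apply: sumr_ge0 => i _; exact: sqr_ge0.
have var_E : \sum_(i | P i) (x i - S / N) ^+ 2
             = \sum_(i | P i) x i ^+ 2 - S ^+ 2 / N.
  transitivity (\sum_(i | P i) (x i ^+ 2 - (2 * (S / N)) * x i + (S / N) ^+ 2)).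
    by apply: eq_bigr => i _; ring.
  rewrite big_split sumrB /= -mulr_sumr sumr_const -/S -mulr_natl -/N.
  by field; rewrite lt0r_neq0.
rewrite var_E subr_ge0 ler_pdivrMr // in var_ge0.
by rewrite mulrC.
Qed.

Lemma sum_sqrt_le (I : finType) (P : pred I) (x : I -> R) :
  (forall i, P i -> 0 <= x i) ->
  \sum_(i | P i) Num.sqrt (x i) <= Num.sqrt (#|P|%:R * \sum_(i | P i) x i).
Proof.
move=> x0; rewrite -[X in X <= _]ger0_norm ?sumr_ge0 // => [|i _]; last exact: sqrtr_ge0.
rewrite -sqrtr_sqr; apply: ler_wsqrtr; apply: le_trans (sqr_sum_le _ _) _.
rewrite ler_wpM2l // le_eqVlt (eq_bigr x) ?eqxx // => i Pi.
by rewrite sqr_sqrtr ?x0.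
Qed.

(* sqrt(x1 + x2) - sqrt x2 >= x1 / (2 sqrt(x1 + x2)) >= c/2 * sqrt x1 *)
Lemma sqrt_heavy_split (x1 x2 c w : R) :
  0 <= x1 -> 0 <= x2 -> 0 <= w -> c ^+ 2 * (x1 + x2) <= x1 -> 2 * w <= c ->
  Num.sqrt x2 + w * Num.sqrt x1 <= Num.sqrt (x1 + x2).
Proof.
move=> x10 x20 w0 heavy wc.
set a := Num.sqrt (x1 + x2); set b := Num.sqrt x1; set e := Num.sqrt x2.
have a0 : 0 <= a := sqrtr_ge0 _; have b0 : 0 <= b := sqrtr_ge0 _.
have abe : a ^+ 2 = b ^+ 2 + e ^+ 2 by rewrite !sqr_sqrtr ?addr_ge0.
have c0 : 0 <= c by lra.
have cab : c * a <= b.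
  by rewrite -(ger0_norm c0) -sqrtr_sqr /a -sqrtrM ?sqr_ge0 // ler_wsqrtr.
have ba : b <= a by rewrite -(ler_pXn2r (n := 2)) ?nnegrE //; nra.
have wba : 2 * w * b <= a.
  have : 2 * w * b <= 2 * w * a by rewrite ler_wpM2l ?mulr_ge0.
  have : 2 * w * a <= c * a by rewrite ler_wpM2r.
  lra.
rewrite -lerBrDr -[e]ger0_norm ?sqrtr_ge0 // -[X in _ <= X]ger0_norm; last lra.
rewrite -sqrtr_sqr -[`|a - w * b|]sqrtr_sqr ler_wsqrtr // sqr_sqrtr //.
have ex2 : e ^+ 2 = x2 by rewrite sqr_sqrtr.
have : 2 * w * (a * b) <= c * (a * b) by rewrite ler_wpM2r ?mulr_ge0.
have : c * a * b <= b * b by rewrite ler_wpM2r.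
nra.
Qed.

End RealFacts.

Definition rho (R : realType) (g : R) := (2 * g ^+ 18)^-1.

Section Scale.
Variables (R : realType) (g : R).
Hypothesis g_ge1 : 1 <= g.

Let g_gt0 : 0 < g. Proof. exact: lt_le_trans ltr01 g_ge1. Qed.

Lemma rho_ge0 : 0 <= rho g.
Proof. by rewrite invr_ge0 mulr_ge0 ?exprn_ge0 // ltW. Qed.

Lemma two_rho_le (k : nat) : (0 < k)%N ->
  2 * (rho g ^+ k * g ^+ (10 * k)) <= (g ^+ (8 * k))^-1.
Proof.
move=> k0; have gk c : g ^+ c != 0 by rewrite expf_neq0 ?lt0r_neq0.
have -> : 2 * (rho g ^+ k * g ^+ (10 * k)) = 2 / 2 ^+ k * (g ^+ (8 * k))^-1.
  rewrite /rho exprVn exprMn -exprM (_ : (18 * k = 8 * k + 10 * k)%N) ?exprD; last lia.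
  by field; rewrite gk expf_neq0 ?pnatr_eq0.
apply: ler_piMl; first by rewrite invr_ge0 exprn_ge0 // ltW.
rewrite ler_pdivrMr ?exprn_gt0 // mul1r.
by rewrite -[X in X <= _]expr1 ler_eXn2l // ltr1n.
Qed.

Lemma sqr_lt_of_heavy (T : R) (k : nat) : (0 < k)%N ->
  (g ^+ (16 * k))^-1 < g ^+ (20 * k) * (T * (g ^+ (38 * k))^-1) -> g ^+ 2 < T.
Proof.
move=> k0; have gk c : g ^+ c != 0 by rewrite expf_neq0 ?lt0r_neq0.
have -> : g ^+ (20 * k) * (T * (g ^+ (38 * k))^-1) = T / g ^+ (2 * k) / g ^+ (16 * k).
  rewrite (_ : (38 * k = 20 * k + 2 * k + 16 * k)%N) ?exprD; last lia.
  by field; rewrite !gk.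
rewrite -[X in X < _]mul1r ltr_pM2r ?invr_gt0 ?exprn_gt0 // ltr_pdivlMr ?exprn_gt0 //.
by rewrite mul1r; apply: le_lt_trans; apply: ler_weXn2l => //; lia.
Qed.

Lemma bound_lt1_cases (T : R) (d : nat) :
  1 <= T -> g ^+ 2 < T -> T * (d%:R * g^-1) ^+ d < 1 -> (1 < d)%N /\ d%:R < g.
Proof.
move=> T1 gT small; set x := d%:R * g^-1.
have x0 : 0 <= x by rewrite mulr_ge0 ?invr_ge0 ?ler0n // ltW.
have xd1 : x ^+ d < 1 by apply: le_lt_trans small; rewrite ler_peMl ?exprn_ge0.
have x1 : x < 1 by rewrite ltNge; apply: contraTN xd1 => x_ge1; rewrite -leNgt exprn_ege1.
have dg : d%:R < g by rewrite /x ltr_pdivrMr // mul1r in x1.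
split=> //; case: d => [|[|d]] in x xd1 small {x0 x1} dg *; rewrite ?expr0 ?ltxx // in xd1.
move: small; rewrite expr1 /x mul1r ltr_pdivrMr // mul1r => Tg.
have : g <= g ^+ 2 by apply: ler_eXnr.
lra.
Qed.

Lemma cell_le_budget (T : R) (d s : nat) : 2 <= g -> 0 <= T -> (d < s)%N ->
  T * (g ^+ (38 * s))^-1 <= (Num.sqrt T * (2 / g) ^+ d.+1 * rho g ^+ s) ^+ 2.
Proof.
move=> g2 T0 ds; have g0 : g != 0 by rewrite lt0r_neq0.
have -> : (g ^+ (38 * s))^-1 = ((2 / g) ^+ s * rho g ^+ s) ^+ 2.
  rewrite -exprMn (_ : 2 / g * rho g = g ^-1 ^+ 19); last by rewrite /rho exprVn; field.
  by rewrite -!exprM exprVn (_ : (19 * (s * 2) = 38 * s)%N) //; lia.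
have r0 : 0 <= 2 / g by rewrite divr_ge0 // ltW.
set a := (2 / g) ^+ s; set b := (2 / g) ^+ d.+1; set r := rho g ^+ s.
rewrite !exprMn sqr_sqrtr // -mulrA ler_wpM2l // ler_wpM2r ?exprn_ge0 ?rho_ge0 //.
rewrite ler_pXn2r ?nnegrE ?exprn_ge0 //; apply: ler_wiXn2l => //.
by rewrite ler_pdivrMr // mul1r.
Qed.

Lemma budget_const_le (T : R) (d : nat) : (1 < d)%N -> d%:R < g -> 1 <= T ->
  Num.sqrt T * (2 / g) ^+ d.+1 <= T * (d%:R * g^-1) ^+ d.
Proof.
move=> d1 dg T1; have r0 : 0 <= 2 / g by rewrite divr_ge0 // ltW.
apply: ler_pM; rewrite ?sqrtr_ge0 ?exprn_ge0 //.
  by rewrite -{2}(sqr_sqrtr (le_trans ler01 T1)) ler_peMr ?sqrtr_ge0 // -sqrtr1 ler_wsqrtr.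
rewrite exprSr -[X in _ <= X]mulr1; apply: ler_pM; rewrite ?exprn_ge0 //.
  rewrite ler_pXn2r ?nnegrE ?mulr_ge0 ?invr_ge0 ?ler0n ?(ltW g_gt0) 1?ltnW //.
  by rewrite ler_wpM2r ?invr_ge0 ?(ltW g_gt0) // ler_nat.
by rewrite ler_pdivrMr // mul1r; apply: le_trans (ltW dg); rewrite ler_nat.
Qed.

End Scale.

Section Gamma.
Variables (R : realType) (q : nat).

Definition gamma : R := powR q%:R (1 / 20).

Lemma gamma_inv : powR q%:R (- (1 / 20)) = gamma^-1 :> R.
Proof. exact: powRN. Qed.

Hypothesis q_gt0 : (0 < q)%N.

Lemma gamma_ge1 : 1 <= gamma.
Proof. by rewrite -(powRr0 q%:R) ler_powR ?ler1n ?divr_ge0. Qed.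

Lemma powR2_log2 (x : R) : powR 2 (x * log2 q%:R) = powR q%:R x.
Proof.
have ln2 : ln (2 : R) != 0 by rewrite lt0r_neq0 // ln_gt0 // ltr1n.
by rewrite /powR !pnatr_eq0 /= -[q == 0%N]negbK -lt0n q_gt0 /log2 -mulrA divfK.
Qed.

Lemma powR_gamma (c : nat) : powR q%:R (c%:R / 20) = gamma ^+ c.
Proof. by rewrite mulrC -[_^-1]mul1r powRrM powR_mulrn // powR_ge0. Qed.

Lemma q_gamma : q%:R = gamma ^+ 20.
Proof. by rewrite -powR_gamma divff ?powRr1 ?pnatr_eq0. Qed.

Lemma light_threshold (k : nat) :
  powR 2 (- ((4 / 5) * log2 q%:R * k%:R)) = (gamma ^+ (16 * k))^-1.
Proof.
rewrite (_ : - (_ * _) = - ((16 * k)%:R / 20) * log2 q%:R); last by rewrite natrM; field.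
by rewrite powR2_log2 powRN powR_gamma.
Qed.

Lemma cell_threshold (t : R) (k : nat) :
  powR 2 (- ((19 / 10) * log2 q%:R * k%:R - t))
  = powR 2 t * (gamma ^+ (38 * k))^-1.
Proof.
rewrite (_ : - (_ - t) = t + - ((38 * k)%:R / 20) * log2 q%:R); last by rewrite natrM; field.
by rewrite powRD ?pnatr_eq0 ?implybT // powR2_log2 powRN powR_gamma.
Qed.

End Gamma.

Arguments gamma {R} q.
Arguments gamma_ge1 {R q}.

Section Density.
Variables (R : realType) (n q : nat) (mu : cube n q * cube n q -> R).
Hypothesis mu_density : is_density mu.

Local Notation C := (cube n q).
Local Notation T := (cube n q * cube n q)%type.
Local Notation m := (dprob mu).
Implicit Types (S E : {set T}) (L : seq ({set C} * {set C})) (I J : {set 'I_n}) (A B : {set C}).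

Lemma pmf_ge0 z : 0 <= pmf_of mu z.
Proof. by rewrite divr_ge0 ?mu_density.1. Qed.

Lemma dprob_ge0 S : 0 <= m S.
Proof. by apply: sumr_ge0 => z _; apply: pmf_ge0. Qed.

Lemma dprob0 : m set0 = 0.
Proof. by rewrite /dprob big_set0. Qed.

Lemma le_dprob (S1 S2 : {set T}) : S1 \subset S2 -> m S1 <= m S2.
Proof.
move=> sS; rewrite /dprob [X in _ <= X](big_setID S1) /= (setIidPr sS) lerDl.
by apply: sumr_ge0 => z _; apply: pmf_ge0.
Qed.

Lemma dprobU (S1 S2 : {set T}) : [disjoint S1 & S2] -> m (S1 :|: S2) = m S1 + m S2.
Proof. by move=> dS; rewrite /dprob -bigU //; apply: eq_bigl => z; rewrite !inE. Qed.

Lemma dprobE (P : pred T) : m [set z | P z] = \sum_(z | P z) pmf_of mu z.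
Proof. by apply: eq_bigl => z; rewrite inE. Qed.

Lemma dprob_gt0_mem S : 0 < m S -> exists z, z \in S.
Proof. by move=> mS; apply/set0Pn; apply: contraTneq mS => ->; rewrite dprob0 ltxx. Qed.

Lemma dprob_fibres (U : finType) (g : T -> U) S :
  m S = \sum_(u in g @: S) m [set z in S | g z == u].
Proof.
rewrite /dprob (partition_big_imset g); apply: eq_bigr => u _.
by apply: eq_bigl => z; rewrite inE.
Qed.

Lemma dprob_setT : m [set: T] = (#|{: T}| != 0%N)%:R.
Proof.
rewrite /dprob /pmf_of -mulr_suml (eq_bigl predT) ?mu_density.2 => [|z]; last by rewrite inE.
by case: eqP => [->|/eqP T0]; rewrite ?mul0r // divff ?pnatr_eq0.
Qed.

Lemma dprob_setT_gt0 : 0 < m [set: T] -> m [set: T] = 1.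
Proof. by rewrite dprob_setT; case: eqP => //; rewrite ltxx. Qed.

Lemma dprob_le1 S : m S <= 1.
Proof.
by apply: le_trans (le_dprob (subsetT S)) _; rewrite dprob_setT; case: eqP.
Qed.

Lemma cond_pmf_sum S (P : pred T) : 0 < m S ->
  \sum_(z | P z) cond_pmf mu S z = m [set z in S | P z] / m S.
Proof.
move=> mS; have T0 : #|{: T}|%:R != 0 :> R.
  by apply: contraTneq mS => T0; rewrite /dprob /pmf_of -mulr_suml T0 invr0 mulr0 ltxx.
rewrite /dprob /pmf_of -!mulr_suml invf_div mulrA divfK // mulr_suml.
rewrite [RHS]big_mkcond [LHS]big_mkcond /=; apply: eq_bigr => z _.
by rewrite /cond_pmf inE; case: (z \in S); case: (P z); rewrite ?mul0r.
Qed.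

Lemma cond_pmf_sum_le1 S (P : pred T) : \sum_(z | P z) cond_pmf mu S z <= 1.
Proof.
have [mS|mS0] := ltrP 0 (m S).
  by rewrite cond_pmf_sum // ler_pdivrMr // mul1r le_dprob // setIdE subsetIl.
rewrite big1 ?ler01 // => z _; rewrite /cond_pmf; case: ifP => // _.
have T0 : #|{: T}|%:R != 0 :> R by rewrite pnatr_eq0 -lt0n; apply/card_gt0P; exists z.
have -> : \sum_(w in S) mu w = m S * #|{: T}|%:R.
  by rewrite /dprob /pmf_of -mulr_suml divfK.
have -> : m S = 0 by apply/eqP; rewrite eq_le mS0 dprob_ge0.
by rewrite mul0r invr0 mulr0.
Qed.

Variable d : nat.

Definition good_rect (r : {set C} * {set C}) :=
  0 < m (setX r.1 r.2) /\ aligned_CBD (cond_pmf mu (setX r.1 r.2)) d.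

Definition good_partition (S : {set T}) (L : seq ({set C} * {set C})) (E : {set T}) :=
  {in L, forall r, good_rect r} /\
  forall z, (count (fun r => z \in setX r.1 r.2) L + (z \in E))%N = (z \in S).

Lemma good_partition_nil S : good_partition S [::] S.
Proof. by []. Qed.

Lemma good_partition1 A B : good_rect (A, B) -> good_partition (setX A B) [:: (A, B)] set0.
Proof. by move=> gAB; split=> [r /[!inE] /eqP -> // | z]; rewrite in_set0 /= !addn0. Qed.

Lemma good_partition_sub S L E : good_partition S L E -> E \subset S.
Proof. by case=> _ LE; apply/subsetP => z zE; have := LE z; rewrite zE addn1; case: (z \in S). Qed.

Lemma good_partition_cat (S1 S2 E1 E2 : {set T}) L1 L2 : [disjoint S1 & S2] ->
  good_partition S1 L1 E1 -> good_partition S2 L2 E2 ->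
  good_partition (S1 :|: S2) (L1 ++ L2) (E1 :|: E2) /\ m (E1 :|: E2) = m E1 + m E2.
Proof.
move=> dS p1 p2; have dE : [disjoint E1 & E2].
  exact: disjointWl (good_partition_sub p1) (disjointWr (good_partition_sub p2) dS).
split; last exact: dprobU.
case: p1 p2 => [g1 c1] [g2 c2]; split=> [r | z].
  by rewrite mem_cat => /orP [/g1 | /g2].
by rewrite count_cat !in_setU_addn // -c1 -c2 addnACA.
Qed.

Lemma good_partition_bigcup (I : finType) (F : I -> {set T}) (b : I -> R) :
  (forall i j, i != j -> [disjoint F i & F j]) ->
  (forall i, exists L E, good_partition (F i) L E /\ m E <= b i) ->
  exists L E, good_partition (\bigcup_i F i) L E /\ m E <= \sum_i b i.
Proof.
move=> dF pF; elim: (index_enum I) (index_enum_uniq I) => [_ | i s IH /andP [si us]].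
  by exists [::], set0; rewrite !big_nil dprob0.
have [L1 [E1 [p1 b1]]] := pF i; have [L2 [E2 [p2 b2]]] := IH us.
have dFi : [disjoint F i & \bigcup_(j <- s) F j].
  rewrite bigcup_seq; apply: bigcup_disjoint => j js; apply: dF.
  by apply: contraNneq si => ->.
have [p mE] := good_partition_cat dFi p1 p2.
by exists (L1 ++ L2), (E1 :|: E2); rewrite !big_cons mE lerD.
Qed.

Lemma CBD_with_cond I S (h : T -> C) : 0 < m S -> (#|I| <= d)%N ->
  {in S &, forall z z', restrict I (h z) = restrict I (h z')} ->
  (forall J, J \subset ~: I -> J != set0 ->
     Hinf_ge (cond_pmf mu S) (fun z => restrict J (h z)) ((4 / 5) * log2 q%:R * #|J|%:R)) ->
  CBD_with (cond_pmf mu S) h d I.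
Proof.
move=> mS Id cI light; split=> // [|J JI].
  have [z0 z0S] := dprob_gt0_mem mS; exists (restrict I (h z0)).
  rewrite cond_pmf_sum // (_ : [set z in S | _] = S) ?divff ?lt0r_neq0 //.
  by apply/setP => z; rewrite inE andb_idr // => zS; rewrite (cI z z0).
have [-> u | Jn] := eqVneq J set0; last exact: light.
by rewrite cards0 mulr0 oppr0 powRr0 cond_pmf_sum_le1.
Qed.

Lemma good_rect_of I A B : 0 < m (setX A B) -> (#|I| <= d)%N ->
  const_on I A -> const_on I B ->
  (forall J, J \subset ~: I -> J != set0 ->
     let thr := (4 / 5) * log2 q%:R * #|J|%:R in
     Hinf_ge (cond_pmf mu (setX A B)) (fun z => restrict J z.1) thr /\
     Hinf_ge (cond_pmf mu (setX A B)) (fun z => restrict J z.2) thr) ->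
  good_rect (A, B).
Proof.
move=> mS Id cA cB light; split=> //; exists I.
split; apply: CBD_with_cond => //.
- by move=> [x y] [x' y'] /[!inE] /andP [xA _] /andP [x'A _]; apply: cA.
- by move=> J JI Jn; case: (light J JI Jn).
- by move=> [x y] [x' y'] /[!inE] /andP [_ yB] /andP [_ y'B]; apply: cB.
- by move=> J JI Jn; case: (light J JI Jn).
Qed.

Lemma good_or_heavy I A B : 0 < m (setX A B) -> (#|I| <= d)%N ->
  const_on I A -> const_on I B ->
  good_rect (A, B) \/
  exists J u, [/\ J \subset ~: I, J != set0 &
    (gamma q ^+ (16 * #|J|))^-1 * m (setX A B) < m (setX [set x in A | restrict J x == u] B) \/
    (gamma q ^+ (16 * #|J|))^-1 * m (setX A B) < m (setX A [set y in B | restrict J y == u])].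
Proof.
move=> mS Id cA cB; set S := setX A B.
pose thr J : R := powR 2 (- ((4 / 5) * log2 q%:R * #|J|%:R)).
pose light (h : T -> C) J :=
  [forall u, \sum_(z | restrict J (h z) == u) cond_pmf mu S z <= thr J].
have [all_light | ] :=
  boolP [forall J : {set 'I_n}, (J \subset ~: I) ==> (J != set0) ==> light fst J && light snd J].
  left; apply: (good_rect_of mS Id cA cB) => J JI Jn.
  have /andP [/forallP l1 /forallP l2] := implyP (implyP (forallP all_light J) JI) Jn.
  by split=> u; [apply: l1 | apply: l2].
rewrite negb_forall => /existsP [J]; rewrite !negb_imply negb_and => /and3P [JI Jn heavy].
have [[x0 _] /[!inE] /andP [/= x0A _]] := dprob_gt0_mem mS.
have q0 := cube_q_gt0 x0 Jn.
right; exists J.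
case/orP: heavy => /forallPn [u]; rewrite -ltNge cond_pmf_sum // ltr_pdivlMr //.
  rewrite (setX_sepl A B (fun x => restrict J x == u)) /thr light_threshold // => heavy.
  by exists u; split=> //; left.
rewrite (setX_sepr A B (fun y => restrict J y == u)) /thr light_threshold // => heavy.
by exists u; split=> //; right.
Qed.

Lemma sum_sqrt_fibres (U : finType) (g : T -> U) S :
  \sum_u Num.sqrt (m [set z in S | g z == u]) <= Num.sqrt (#|g @: S|%:R * m S).
Proof.
rewrite (bigID (mem (g @: S))) /= [X in _ + X]big1 ?addr0 => [|u uS]; last first.
  rewrite (_ : [set z in S | g z == u] = set0) ?dprob0 ?sqrtr0 //.
  apply/setP => z; rewrite !inE; apply: contraNF uS => /andP [zS /eqP <-].
  exact: imset_f.
by rewrite [m S](dprob_fibres g); apply: sum_sqrt_le => u _; apply: dprob_ge0.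
Qed.

Section Recursion.
Variable K : R.
Hypotheses (q_gt0 : (0 < q)%N) (K_ge0 : 0 <= K).
Hypothesis deep_cells_small : forall I A B,
  const_on I A -> const_on I B -> (d < #|I|)%N ->
  m (setX A B) <= (K * rho (gamma q) ^+ #|I|) ^+ 2.

Local Notation g := (gamma q : R).

Let g_ge1 : 1 <= g. Proof. exact: gamma_ge1. Qed.
Let rho_s_ge0 s : 0 <= rho g ^+ s. Proof. by rewrite exprn_ge0 // rho_ge0. Qed.

(* [s] counts the coordinates on which the rectangle is already fixed. *)
Definition budgeted S s :=
  exists L E, good_partition S L E /\ m E <= K * Num.sqrt (m S) * rho g ^+ s.

Lemma budgeted_discard S s : m S <= (K * rho g ^+ s) ^+ 2 -> budgeted S s.
Proof.
move=> small; exists [::], S; split; first exact: good_partition_nil.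
have Kr0 : 0 <= K * rho g ^+ s by rewrite mulr_ge0.
have sq : Num.sqrt (m S) <= K * rho g ^+ s.
  by rewrite -(ger0_norm Kr0) -sqrtr_sqr ler_wsqrtr.
rewrite -{1}(sqr_sqrtr (dprob_ge0 S)) expr2 (mulrC K) -mulrA.
by rewrite ler_wpM2l ?sqrtr_ge0.
Qed.

Lemma budgeted_good A B s : good_rect (A, B) -> budgeted (setX A B) s.
Proof.
move=> gAB; exists [:: (A, B)], set0; split; first exact: good_partition1.
by rewrite dprob0 !mulr_ge0 ?sqrtr_ge0.
Qed.

Lemma sum_sqrt_restrict_fibres J (h : T -> C) S :
  \sum_v Num.sqrt (m [set z in S | restrict J (h z) == v])
  <= g ^+ (10 * #|J|) * Num.sqrt (m S).
Proof.
apply: le_trans (sum_sqrt_fibres _ _) _.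
have img : (#|[set restrict J (h z) | z in S]| <= q ^ #|J|)%N by apply: card_restrict.
apply: le_trans (_ : Num.sqrt ((q ^ #|J|)%:R * m S) <= _).
  by rewrite ler_wsqrtr // ler_wpM2r ?dprob_ge0 // ler_nat.
rewrite natrX q_gamma // -exprM sqrtrM ?exprn_ge0 ?(le_trans ler01) //.
have -> : (20 * #|J| = 10 * #|J| * 2)%N by lia.
by rewrite exprM sqrtr_sqr ger0_norm ?exprn_ge0 ?(le_trans ler01).
Qed.

Lemma budget_split_le (x1 x2 e1 e2 : R) s k : (0 < k)%N -> 0 <= x1 -> 0 <= x2 ->
  (g ^+ (16 * k))^-1 * (x1 + x2) <= x1 ->
  e2 <= K * Num.sqrt x2 * rho g ^+ s ->
  e1 <= K * rho g ^+ (s + k) * (g ^+ (10 * k) * Num.sqrt x1) ->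
  e2 + e1 <= K * Num.sqrt (x1 + x2) * rho g ^+ s.
Proof.
move=> k0 x10 x20 heavy b2 b1; apply: le_trans (lerD b2 b1) _.
set w := rho g ^+ k * g ^+ (10 * k).
have -> : K * Num.sqrt x2 * rho g ^+ s + K * rho g ^+ (s + k) * (g ^+ (10 * k) * Num.sqrt x1)
          = K * rho g ^+ s * (Num.sqrt x2 + w * Num.sqrt x1) by rewrite /w exprD; ring.
rewrite mulrAC ler_wpM2r // ler_wpM2l //.
apply: (sqrt_heavy_split (c := (g ^+ (8 * k))^-1)) => //.
- by rewrite /w mulr_ge0 ?rho_s_ge0 ?exprn_ge0 ?(le_trans ler01).
- by rewrite exprVn -exprM (_ : (8 * k * 2 = 16 * k)%N) //; lia.
- exact: two_rho_le.
Qed.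

Lemma budgeted_split S S1 J (h : T -> C) s : J != set0 -> S1 \subset S ->
  (g ^+ (16 * #|J|))^-1 * m S < m S1 ->
  budgeted (S :\: S1) s ->
  (forall v, budgeted [set z in S1 | restrict J (h z) == v] (s + #|J|)) ->
  budgeted S s.
Proof.
move=> Jn S1S heavy [L2 [E2 [p2 b2]]] fibres.
pose F v := [set z in S1 | restrict J (h z) == v].
have dF v w : v != w -> [disjoint F v & F w].
  apply: contraNT; rewrite -setI_eq0 => /set0Pn [z].
  by rewrite !inE => /andP [/andP [_ /eqP <-] /andP [_ /eqP <-]].
have S1E : \bigcup_v F v = S1.
  apply/setP => z; apply/bigcupP/idP => [[v _] | zS1]; first by rewrite inE => /andP [].
  by exists (restrict J (h z)); rewrite // inE zS1 /=.
have [L1 [E1 [p1 b1]]] := good_partition_bigcup dF fibres.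
rewrite S1E in p1.
have dS : [disjoint S1 & S :\: S1].
  by rewrite disjoint_subset; apply/subsetP => z zS1; rewrite !inE zS1.
have [p mE] := good_partition_cat dS p1 p2.
have SE : S1 :|: S :\: S1 = S by rewrite -{1}(setIidPr S1S) setID.
have mSE : m S = m S1 + m (S :\: S1) by rewrite -dprobU ?SE.
exists (L1 ++ L2), (E1 :|: E2); rewrite -SE; split=> //; rewrite SE mE addrC mSE.
apply: (budget_split_le (k := #|J|)); rewrite ?card_gt0 ?dprob_ge0 -?mSE ?(ltW heavy) //.
apply: le_trans b1 _.
rewrite (eq_bigr (fun v => K * rho g ^+ (s + #|J|) * Num.sqrt (m (F v)))) => [|v _]; last first.
  by rewrite mulrAC.
rewrite -mulr_sumr ler_wpM2l ?mulr_ge0 //; exact: sum_sqrt_restrict_fibres.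
Qed.

Lemma card_setD_sep (A : {set C}) (P : pred C) x : x \in A -> P x ->
  (#|A :\: [set y in A | P y]| < #|A|)%N.
Proof.
move=> xA Px; apply: proper_card; apply/properP; split; first exact: subsetDl.
by exists x; rewrite // !inE xA Px.
Qed.

Lemma budgeted_rect I A B : const_on I A -> const_on I B -> budgeted (setX A B) #|I|.
Proof.
have [k] := ubnP (n - #|I|); elim: k I A B => // k IHk I A B ltIk.
have [l] := ubnP (#|A| + #|B|); elim: l A B => // l IHl A B ltABl cA cB.
have [dI | Id] := ltnP d #|I|; first exact/budgeted_discard/deep_cells_small.
have [mS0 | mS] := lerP (m (setX A B)) 0.
  by apply: budgeted_discard; apply: le_trans mS0 _; rewrite sqr_ge0.
have [gAB | [J [u [JI Jn heavy]]]] := good_or_heavy mS Id cA cB.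
  exact: budgeted_good.
have cIJ : #|I :|: J| = (#|I| + #|J|)%N.
  have /disjoint_setI0 IJ0 : [disjoint I & J] by rewrite disjoint_sym disjoints_subset.
  by rewrite cardsU IJ0 cards0 subn0.
have ltIJk : (n - #|I :|: J| < k)%N.
  by have := max_card (mem (I :|: J)); rewrite card_ord cIJ -card_gt0 in Jn *; lia.
have heavy_gt0 (A' B' : {set C}) :
    (g ^+ (16 * #|J|))^-1 * m (setX A B) < m (setX A' B') -> exists x y, x \in A' /\ y \in B'.
  move=> h; have mpos : 0 < m (setX A' B').
    by apply: le_lt_trans h; rewrite mulr_ge0 ?dprob_ge0 // invr_ge0 exprn_ge0 ?(le_trans ler01).
  by have [[x y]] := dprob_gt0_mem mpos; rewrite inE => /andP [xA yB]; exists x, y.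
case: heavy => heavy; have [x [y [xA1 yB1]]] := heavy_gt0 _ _ heavy.
- move: xA1; rewrite inE => /andP [xA xu].
  apply: (budgeted_split (S1 := setX _ B) (h := snd) Jn _ heavy).
  + by rewrite setXS // setIdE subsetIl.
  + rewrite setXDl; apply: IHl => //; last by apply: const_onS cA; apply: subsetDl.
    by rewrite -ltnS (leq_trans _ ltABl) // ltnS ltn_add2r (card_setD_sep xA xu).
  + move=> v; rewrite (setX_sepr _ B (fun y => restrict J y == v)) -cIJ.
    by apply: IHk => //; apply: const_onU.
- move: yB1; rewrite inE => /andP [yB yu].
  apply: (budgeted_split (S1 := setX A _) (h := fst) Jn _ heavy).
  + by rewrite setXS // setIdE subsetIl.
  + rewrite setXDr; apply: IHl => //; last by apply: const_onS cB; apply: subsetDl.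
    by rewrite -ltnS (leq_trans _ ltABl) // ltnS ltn_add2l (card_setD_sep yB yu).
  + move=> v; rewrite (setX_sepl A _ (fun x => restrict J x == v)) -cIJ.
    by apply: IHk => //; apply: const_onU.
Qed.

End Recursion.

Definition cbd_decomposition (b : R) :=
  exists (N : nat) (A B : 'I_N -> {set C}) (Err : {set T}),
    [/\ (forall z, z \in Err \/ exists i, z \in setX (A i) (B i)),
        (forall i j, i != j -> [disjoint setX (A i) (B i) & setX (A j) (B j)]),
        (forall i, [disjoint setX (A i) (B i) & Err]),
        (forall i, good_rect (A i, B i)) &
        m Err <= b].

Lemma decomposition_of_partition L E b :
  good_partition [set: T] L E -> m E <= b -> cbd_decomposition b.
Proof.
move=> [gL cL] mE; pose r0 : {set C} * {set C} := (set0, set0).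
pose in_rect (z : T) (r : {set C} * {set C}) := z \in setX r.1 r.2.
have {}cL z : (count (in_rect z) L + (z \in E))%N = 1%N by rewrite cL inE.
exists (size L), (fun i => (nth r0 L i).1), (fun i => (nth r0 L i).2), E.
split=> // [z | i j ij | i | i]; last by have := gL _ (mem_nth r0 (ltn_ord i)); case: nth.
- case zE: (z \in E); [by left | right].
  have : has (in_rect z) L by rewrite has_count; move: (cL z); rewrite zE addn0 => ->.
  case/hasP => r rL zr; have iL : (index r L < size L)%N by rewrite index_mem.
  by exists (Ordinal iL); rewrite /= nth_index.
- rewrite -setI_eq0; apply/set0Pn => -[z /setIP [zi zj]].
  by have := count_nth_gt1 (a := in_rect z) ij zi zj; have := cL z; lia.
- rewrite -setI_eq0; apply/set0Pn => -[z /setIP [zi zE]].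
  have : (0 < count (in_rect z) L)%N.
    by rewrite -has_count; apply/hasP; exists (nth r0 L i) => //; apply: mem_nth.
  by have := cL z; rewrite zE; lia.
Qed.

Section Entropy.
Variable t : R.
Hypothesis Hent : forall I : {set 'I_n},
  Hinf_ge (pmf_of mu) (fun z => (restrict I z.1, restrict I z.2))
          ((19 / 10) * log2 q%:R * #|I|%:R - t).

Local Notation g := (gamma q : R).

Lemma pow2t_ge1 : 0 < m [set: T] -> 1 <= powR 2 t.
Proof.
move=> mT; have [z0 _] := dprob_gt0_mem mT.
have := Hent set0 (restrict set0 z0.1, restrict set0 z0.2).
rewrite cards0 mulr0 sub0r opprK; apply: le_trans.
rewrite -(dprob_setT_gt0 mT) -dprobE le_dprob //; apply/subsetP => z _.
by rewrite inE xpair_eqE; apply/andP; split; apply/restrictP => i; rewrite inE.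
Qed.

Lemma dprob_rect_le J A B : (0 < q)%N ->
  m (setX A B) <= (#|[set restrict J x | x in A]| * #|[set restrict J y | y in B]|)%:R
                  * (powR 2 t * (g ^+ (38 * #|J|))^-1).
Proof.
move=> q0; rewrite (dprob_fibres (fun z => (restrict J z.1, restrict J z.2))) cells_setX.
rewrite -cardsX mulr_natl -sumr_const; apply: ler_sum => uv _.
apply: le_trans (le_dprob (S2 := [set z | (restrict J z.1, restrict J z.2) == uv]) _) _.
  by apply/subsetP => z; rewrite !inE => /andP [].
by rewrite dprobE -cell_threshold //; apply: Hent.
Qed.

Lemma sqr_gamma_lt_pow2t J A B : (0 < q)%N -> J != set0 ->
  const_on J A \/ const_on J B ->
  (g ^+ (16 * #|J|))^-1 < m (setX A B) -> g ^+ 2 < powR 2 t.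
Proof.
move=> q0 Jn cAB heavy; have g1 : 1 <= g := gamma_ge1 q0.
apply: (sqr_lt_of_heavy g1 (k := #|J|)); first by rewrite card_gt0.
apply: lt_le_trans heavy (le_trans (dprob_rect_le J A B q0) _).
rewrite ler_wpM2r ?mulr_ge0 ?powR_ge0 ?invr_ge0 ?exprn_ge0 ?(le_trans ler01 g1) //.
rewrite exprM -q_gamma // -natrX ler_nat.
case: cAB => [/card_restrict_const cA | /card_restrict_const cB].
  by rewrite -[(q ^ _)%N]mul1n leq_mul //; exact: (card_restrict id).
by rewrite -[(q ^ _)%N]muln1 leq_mul //; exact: (card_restrict id).
Qed.

Lemma dprob_cell_le I A B : (0 < q)%N -> const_on I A -> const_on I B ->
  m (setX A B) <= powR 2 t * (g ^+ (38 * #|I|))^-1.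
Proof.
move=> q0 cA cB; apply: le_trans (dprob_rect_le I A B q0) _.
rewrite ler_piMl ?mulr_ge0 ?powR_ge0 ?invr_ge0 ?exprn_ge0 ?(le_trans ler01 (gamma_ge1 q0)) //.
by rewrite (_ : 1 = 1%:R) // ler_nat (leq_mul (card_restrict_const cA) (card_restrict_const cB)).
Qed.

Lemma good_partition_small_error :
  exists L E, good_partition [set: T] L E /\
    m E <= powR 2 t * (d%:R * powR q%:R (- (1 / 20))) ^+ d.
Proof.
rewrite gamma_inv; set b := powR 2 t * _.
have b0 : 0 <= b by rewrite mulr_ge0 ?powR_ge0 // exprn_ge0 // mulr_ge0 ?invr_ge0 ?powR_ge0.
have [mT0 | mT] := lerP (m [set: T]) 0.
  by exists [::], [set: T]; split=> //; apply: le_trans mT0 b0.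
have [b_ge1 | b_lt1] := lerP 1 b.
  by exists [::], [set: T]; split=> //; apply: le_trans (dprob_le1 _) b_ge1.
have t_ge1 := pow2t_ge1 mT; have mT1 := dprob_setT_gt0 mT.
rewrite -setXT in mT mT1 *.
have const0 : const_on set0 [set: C].
  by move=> x x' _ _; apply/eqP/restrictP => i; rewrite inE.
have I0 : (#|@set0 'I_n| <= d)%N by rewrite cards0.
have [good | [J [u [_ Jn heavy]]]] := good_or_heavy mT I0 const0 const0.
  by exists [:: ([set: C], [set: C])], set0; rewrite dprob0; split=> //; apply: good_partition1.
have [[x0 _] _] := dprob_gt0_mem mT; have q0 := cube_q_gt0 x0 Jn.
have g1 : 1 <= g := gamma_ge1 q0.
have g2t : g ^+ 2 < powR 2 t.
  case: heavy; rewrite mT1 mulr1 => heavy; apply: (sqr_gamma_lt_pow2t q0 Jn _ heavy).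
    by left; apply: const_on_sep.
  by right; apply: const_on_sep.
have [d_gt1 dg] := bound_lt1_cases g1 t_ge1 g2t b_lt1.
have g2 : 2 <= g by apply: le_trans (ltW dg); rewrite ler_nat.
pose K := Num.sqrt (powR 2 t) * (2 / g) ^+ d.+1.
have K0 : 0 <= K by rewrite mulr_ge0 ?sqrtr_ge0 // exprn_ge0 // divr_ge0 // (le_trans ler01 g1).
have deep I A B : const_on I A -> const_on I B -> (d < #|I|)%N ->
    m (setX A B) <= (K * rho g ^+ #|I|) ^+ 2.
  move=> cA cB dI; apply: le_trans (dprob_cell_le q0 cA cB) _.
  by rewrite /K; apply: (cell_le_budget g1) => //; apply: powR_ge0.
have [L [E [p mE]]] := budgeted_rect q0 K0 deep const0 const0.
exists L, E; split=> //; apply: le_trans mE _.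
by rewrite mT1 sqrtr1 mulr1 cards0 expr0 mulr1; apply: budget_const_le.
Qed.

End Entropy.

End Density.

Theorem theorem6p4 (R : realType) (n q : nat) (t : R)
    (mu : cube n q * cube n q -> R) :
  is_density mu ->
  (forall I : {set 'I_n},
     Hinf_ge (pmf_of mu) (fun z => (restrict I z.1, restrict I z.2))
             ((19 / 10) * log2 q%:R * #|I|%:R - t)) ->
  forall d : nat,
  exists (N : nat) (A B : 'I_N -> {set cube n q})
         (Err : {set cube n q * cube n q}),
    [/\ (* partition of [q]^n x [q]^n into the rectangles A_i x B_i and Err *)
        (forall z, z \in Err \/ exists i, z \in setX (A i) (B i)),
        (forall i j, i != j -> [disjoint setX (A i) (B i) & setX (A j) (B j)]),
        (forall i, [disjoint setX (A i) (B i) & Err]),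
        (* (1): conditioned on R_i (a positive-probability event), X_i, Y_i
           are aligned d-CBD *)
        (forall i, 0 < dprob mu (setX (A i) (B i)) /\
                   aligned_CBD (cond_pmf mu (setX (A i) (B i))) d) &
        (* (2) *)
        dprob mu Err <= powR 2 t * (d%:R * powR q%:R (- (1 / 20))) ^+ d].
Proof.
move=> mu_density Hent d.
have [L [E [pLE mE]]] := good_partition_small_error mu_density d Hent.
exact: decomposition_of_partition pLE mE.
Qed.
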